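(* Let $\theta\in(\pi,2\pi)$. Then for all $x,y\in S_\theta$, $s_{S_\theta}(x,y)\le\sqrt2\sin(\theta/4)\,p_{S_\theta}(x,y)$, and the constant $\sqrt2\sin(\theta/4)$ is sharp.
   Context: $S_\theta=\{x\in\mathbb{C}:0<\arg(x)<\theta\}$. For a domain $G\subsetneq\mathbb{C}$, $d_G(x)=\inf\{|x-z|:z\in\partial G\}$, $s_G(x,y)=\frac{|x-y|}{\inf_{z\in\partial G}(|x-z|+|z-y|)}$, $p_G(x,y)=\frac{|x-y|}{\sqrt{|x-y|^2+4d_G(x)d_G(y)}}$. *)

From Stdlib Require Import Reals.
From Coquelicot Require Import Coquelicot.
Open Scope R_scope.

(* Sector S_theta = { x in C : 0 < arg x < theta }, arg taken in [0, 2*pi)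
   (the only reading giving a domain when theta > pi).  Written in polar form:
   x = r e^{i t} with r > 0 and 0 < t < theta. *)
Definition sector (theta : R) (x : C) : Prop :=
  exists r t : R, 0 < r /\ 0 < t /\ t < theta /\ x = (r * cos t, r * sin t).

Definition boundary (G : C -> Prop) (z : C) : Prop :=
  forall e : R, 0 < e ->
    (exists w, G w /\ Cmod (Cminus w z) < e) /\
    (exists w, ~ G w /\ Cmod (Cminus w z) < e).

Definition dist_bd (G : C -> Prop) (x : C) : R :=
  real (Glb_Rbar (fun d => exists z, boundary G z /\ d = Cmod (Cminus x z))).

Definition s_metric (G : C -> Prop) (x y : C) : R :=
  Cmod (Cminus x y) /
  real (Glb_Rbar (fun d => exists z, boundary G z /\
                     d = Cmod (Cminus x z) + Cmod (Cminus z y))).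

Definition p_metric (G : C -> Prop) (x y : C) : R :=
  Cmod (Cminus x y) /
  sqrt (Cmod (Cminus x y) ^ 2 + 4 * dist_bd G x * dist_bd G y).

From Stdlib Require Import Reals Lra Psatz Classical.
From Coquelicot Require Import Coquelicot.
Open Scope R_scope.

(* The complement of S_theta is the closed wedge W = {Im z <= 0, Im (e^{-i theta} z) >= 0},
   a convex cone of opening 2 pi - theta < pi, and it contains the boundary of S_theta.
   For x, y in S_theta and z in W write x - z = u e^{i a} and y - z = v e^{i b} with
   a, b in (0, theta).  Every point of z + W lies in W, and the segment from x to it crosses
   the boundary, so d(x) is at most the distance from u e^{i a} to either ray of W, namely
   u sin (min a (pi/2)) and u sin (min (theta - a) (pi/2)); likewise for y.  A trigonometric
   estimate bounds the product of these by u v ((1 + cos (a - b)) / 2 - cos (theta / 2)), whence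
     |x - y|^2 + 4 d(x) d(y) <= (1 - cos (theta/2)) (|x - z| + |z - y|)^2
                             = 2 sin^2 (theta/4) (|x - z| + |z - y|)^2,
   and the infimum over boundary points z gives s <= sqrt 2 sin (theta/4) p.  The pair
   e^{i theta/4}, e^{3 i theta/4} attains the constant. *)

Definition polar (r t : R) : C := (r * cos t, r * sin t).

Lemma Cmod_sub_sym (a b : C) : Cmod (Cminus a b) = Cmod (Cminus b a).
Proof. rewrite <- Cmod_opp. f_equal. ring. Qed.

Lemma Cmod_sub_triangle (x y z : C) :
  Cmod (Cminus x y) <= Cmod (Cminus x z) + Cmod (Cminus z y).
Proof.
  replace (Cminus x y) with (Cplus (Cminus x z) (Cminus z y)) by ring.
  apply Cmod_triangle.
Qed.

Lemma Cmod_polar (r t : R) : 0 <= r -> Cmod (polar r t) = r.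
Proof.
  intros Hr. unfold Cmod, polar; cbn [fst snd].
  pose proof (sin2_cos2 t) as E; unfold Rsqr in E.
  replace ((r * cos t) ^ 2 + (r * sin t) ^ 2)
    with (r ^ 2 * (sin t * sin t + cos t * cos t)) by ring.
  rewrite E, Rmult_1_r. now apply sqrt_pow2.
Qed.

Lemma Cmod_polar_sub_sq (u v a b : R) :
  Cmod (Cminus (polar u a) (polar v b)) ^ 2 = u ^ 2 + v ^ 2 - 2 * u * v * cos (a - b).
Proof.
  rewrite Cmod2_alt. unfold polar, Cminus, Cplus, Copp, Re, Im; cbn [fst snd]. rewrite cos_minus.
  pose proof (sin2_cos2 a) as Ea; pose proof (sin2_cos2 b) as Eb; unfold Rsqr in Ea, Eb.
  transitivity (u ^ 2 * (sin a * sin a + cos a * cos a) + v ^ 2 * (sin b * sin b + cos b * cos b)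
                - 2 * u * v * (cos a * cos b + sin a * sin b)); [ring |].
  rewrite Ea, Eb. ring.
Qed.

Lemma unit_circle_angle (c s : R) : c ^ 2 + s ^ 2 = 1 ->
  exists t, 0 <= t < 2 * PI /\ cos t = c /\ sin t = s.
Proof.
  intros Hcs.
  assert (Hc : -1 <= c <= 1) by nra.
  assert (Hsin : sin (acos c) = Rabs s).
  { rewrite sin_acos by exact Hc. rewrite <- sqrt_Rsqr_abs. f_equal. unfold Rsqr. lra. }
  pose proof (acos_bound c) as Hbound. pose proof PI_RGT_0.
  destruct (Rle_lt_dec 0 s) as [Hs | Hs].
  - exists (acos c). rewrite cos_acos, Hsin, Rabs_pos_eq by assumption. repeat split; lra.
  - rewrite Rabs_left in Hsin by exact Hs.
    assert (acos c <> 0) by (intros E; rewrite E, sin_0 in Hsin; lra).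
    exists (2 * PI - acos c).
    rewrite cos_minus, sin_minus, cos_2PI, sin_2PI, cos_acos, Hsin by exact Hc.
    repeat split; lra.
Qed.

Lemma polar_exists (z : C) : z <> 0 ->
  exists r t, 0 < r /\ 0 <= t < 2 * PI /\ z = polar r t.
Proof.
  intros Hz. apply Cmod_gt_0 in Hz. set (r := Cmod z) in Hz.
  assert (Hr2 : r ^ 2 = fst z ^ 2 + snd z ^ 2) by apply Cmod2_alt.
  destruct (unit_circle_angle (fst z / r) (snd z / r)) as (t & Ht & Hc & Hs).
  { transitivity ((fst z ^ 2 + snd z ^ 2) / r ^ 2); [field; lra |].
    rewrite <- Hr2. field. lra. }
  exists r, t. split; [exact Hz | split; [exact Ht |]].
  unfold polar. rewrite Hc, Hs. destruct z as [a b]; simpl. f_equal; field; lra.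
Qed.

(* [im_rot phi z] is Im (e^{-i phi} z): [0 <= im_rot phi z] is the closed half-plane to the
   left of the line through 0 directed by e^{i phi}. *)
Definition im_rot (phi : R) (z : C) : R := snd z * cos phi - fst z * sin phi.

Lemma im_rot_polar (phi r t : R) : im_rot phi (polar r t) = r * sin (t - phi).
Proof. unfold im_rot, polar; simpl. rewrite sin_minus. ring. Qed.

Lemma im_rot_add (phi : R) (p q : C) : im_rot phi (Cplus p q) = im_rot phi p + im_rot phi q.
Proof. unfold im_rot; simpl. ring. Qed.

Lemma im_rot_sub_le_Cmod (phi : R) (w z : C) :
  im_rot phi w - im_rot phi z <= Cmod (Cminus w z).
Proof.
  destruct w as [a b], z as [c d]. unfold im_rot, Cmod, Cminus, Cplus, Copp; cbn [fst snd].
  pose proof (sin2_cos2 phi) as E; unfold Rsqr in E.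
  apply Rle_trans with (Rabs (b * cos phi - a * sin phi - (d * cos phi - c * sin phi)));
    [apply Rle_abs |].
  rewrite <- sqrt_Rsqr_abs. apply sqrt_le_1_alt. unfold Rsqr.
  assert (0 <= ((a - c) * cos phi + (b - d) * sin phi) ^ 2) by apply pow2_ge_0.
  transitivity (((a + - c) ^ 2 + (b + - d) ^ 2) * (sin phi * sin phi + cos phi * cos phi)
                - ((a - c) * cos phi + (b - d) * sin phi) ^ 2); [| rewrite E]; nra.
Qed.

Lemma im_rot_nonneg_of_approx (phi : R) (z : C) :
  (forall e, 0 < e -> exists w, 0 <= im_rot phi w /\ Cmod (Cminus w z) < e) ->
  0 <= im_rot phi z.
Proof.
  intros Happrox. apply Rnot_lt_le; intros Hneg.
  destruct (Happrox (- im_rot phi z)) as (w & Hw & Hwz); [lra |].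
  pose proof (im_rot_sub_le_Cmod phi w z). lra.
Qed.

Lemma first_exit (H : R -> Prop) : H 0 -> ~ H 1 ->
  exists t0, 0 <= t0 <= 1 /\ (forall s, 0 <= s < t0 -> H s) /\
    (forall e, 0 < e -> exists t, t0 <= t < t0 + e /\ t <= 1 /\ ~ H t).
Proof.
  intros H0 H1.
  set (A := fun t => 0 <= t <= 1 /\ forall s, 0 <= s <= t -> H s).
  assert (A0 : A 0) by (split; [lra | intros s Hs; replace s with 0 by lra; exact H0]).
  assert (A_bound : bound A) by (exists 1; intros t [Ht _]; lra).
  destruct (completeness A A_bound (ex_intro _ 0 A0)) as [t0 [Hub Hleast]].
  assert (Ht0 : 0 <= t0 <= 1).
  { split; [now apply Hub | apply Hleast; intros t [Ht _]; lra]. }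
  assert (before : forall s, 0 <= s < t0 -> H s).
  { intros s Hs. apply NNPP; intros Hns.
    enough (t0 <= s) by lra.
    apply Hleast; intros t [Ht Hall].
    destruct (Rle_lt_dec t s) as [| Hst]; [assumption |].
    exfalso; apply Hns, Hall; lra. }
  exists t0; split; [exact Ht0 | split; [exact before |]].
  intros e He. apply NNPP; intros Hno.
  set (t1 := Rmin 1 (t0 + e / 2)).
  assert (A1 : A t1).
  { split; [split; [apply Rmin_glb; lra | apply Rmin_l] |].
    intros s Hs. destruct (Rlt_le_dec s t0) as [Hst | Hst]; [apply before; lra |].
    apply NNPP; intros Hns; apply Hno; exists s.
    assert (t1 <= 1 /\ t1 <= t0 + e / 2) by (split; [apply Rmin_l | apply Rmin_r]).
    repeat split; auto; lra. }
  assert (Ht1 : t1 = 1).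
  { assert (Hle : t1 <= t0) by (apply Hub; exact A1).
    revert Hle; unfold t1; apply Rmin_case; lra. }
  apply H1. rewrite <- Ht1. apply (proj2 A1). lra.
Qed.

Lemma segment_meets_boundary (G : C -> Prop) (x q : C) : G x -> ~ G q ->
  exists z, boundary G z /\ Cmod (Cminus x z) <= Cmod (Cminus x q).
Proof.
  intros Gx Gq.
  set (P := fun t : R => Cplus x (Cmult t (Cminus q x))).
  set (N := Cmod (Cminus q x)).
  assert (HN : 0 <= N) by apply Cmod_ge_0.
  assert (dist_P : forall s t, Cmod (Cminus (P s) (P t)) = Rabs (s - t) * N).
  { intros s t. unfold P, N. rewrite <- Cmod_R, <- Cmod_mult. f_equal.
    rewrite RtoC_minus. ring. }
  assert (P0 : P 0 = x) by (unfold P; ring).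
  assert (P1 : P 1 = q) by (unfold P; ring).
  destruct (first_exit (fun t => G (P t))) as (t0 & Ht0 & before & after);
    [now rewrite P0 | now rewrite P1 |].
  exists (P t0). split.
  - intros e He.
    set (d := e / (N + 1)).
    assert (Hd : 0 < d) by (apply Rdiv_lt_0_compat; lra).
    assert (near : forall s, Rabs (s - t0) < d -> Cmod (Cminus (P s) (P t0)) < e).
    { intros s Hs. rewrite dist_P.
      apply Rle_lt_trans with (d * N); [apply Rmult_le_compat_r; lra |].
      unfold d. apply (Rmult_lt_reg_r (N + 1)); [lra |].
      replace (e / (N + 1) * N * (N + 1)) with (e * N) by (field; lra). nra. }
    split.
    + destruct (Req_dec t0 0) as [E0 | Hpos].
      * exists (P t0). rewrite E0, P0. split; [exact Gx |].
        replace (Cminus x x) with (RtoC 0) by ring. rewrite Cmod_0. exact He.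
      * set (s := t0 - Rmin t0 d / 2).
        assert (Hm : 0 < Rmin t0 d <= d) by (split; [apply Rmin_glb_lt | apply Rmin_r]; lra).
        assert (Rmin t0 d <= t0) by apply Rmin_l.
        exists (P s). split; [apply before; unfold s; lra |].
        apply near. apply Rabs_def1; unfold s; lra.
    + destruct (after d Hd) as (t & Ht & Ht1 & Hnt).
      exists (P t). split; [exact Hnt |]. apply near. apply Rabs_def1; lra.
  - replace (Cmod (Cminus x (P t0))) with (Cmod (Cminus (P 0) (P t0))) by now rewrite P0.
    rewrite dist_P, Cmod_sub_sym. fold N.
    rewrite Rabs_minus_sym, Rminus_0_r, Rabs_pos_eq by lra. nra.
Qed.

Lemma real_Glb_Rbar_le (E : R -> Prop) (l v : R) :
  (forall w, E w -> l <= w) -> E v -> real (Glb_Rbar E) <= v.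
Proof.
  intros Hl Hv. destruct (Glb_Rbar_correct E) as [Hlb Hglb].
  destruct (Glb_Rbar E) as [g | |]; simpl.
  - exact (Hlb v Hv).
  - destruct (Hlb v Hv).
  - destruct (Hglb l Hl).
Qed.

Lemma real_Glb_Rbar_ge (E : R -> Prop) (m v : R) :
  (forall w, E w -> m <= w) -> E v -> m <= real (Glb_Rbar E).
Proof.
  intros Hm Hv. destruct (Glb_Rbar_correct E) as [Hlb Hglb].
  destruct (Glb_Rbar E) as [g | |]; simpl.
  - exact (Hglb m Hm).
  - destruct (Hlb v Hv).
  - destruct (Hglb m Hm).
Qed.

Section BoundaryInfima.

Variables (G : C -> Prop) (z0 : C).
Hypothesis boundary_z0 : boundary G z0.

Definition bd_detour (x y : C) : R :=
  real (Glb_Rbar (fun d => exists z, boundary G z /\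
                     d = Cmod (Cminus x z) + Cmod (Cminus z y))).

Lemma dist_bd_ge (x : C) (m : R) :
  (forall z, boundary G z -> m <= Cmod (Cminus x z)) -> m <= dist_bd G x.
Proof.
  intros Hm. apply real_Glb_Rbar_ge with (Cmod (Cminus x z0)).
  - intros w (z & Hz & ->). exact (Hm z Hz).
  - exists z0. split; [exact boundary_z0 | reflexivity].
Qed.

Lemma dist_bd_nonneg (x : C) : 0 <= dist_bd G x.
Proof. apply dist_bd_ge. intros z _. apply Cmod_ge_0. Qed.

Lemma dist_bd_le (x z : C) : boundary G z -> dist_bd G x <= Cmod (Cminus x z).
Proof.
  intros Hz. apply real_Glb_Rbar_le with 0.
  - intros w (z' & _ & ->). apply Cmod_ge_0.
  - exists z. split; [exact Hz | reflexivity].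
Qed.

Lemma dist_bd_le_of_not_in (x q : C) : G x -> ~ G q -> dist_bd G x <= Cmod (Cminus x q).
Proof.
  intros Gx Gq. destruct (segment_meets_boundary G x q Gx Gq) as (z & Hz & Hxz).
  eapply Rle_trans; [apply dist_bd_le, Hz | exact Hxz].
Qed.

Lemma dist_bd_ge_neg_im_rot (phi : R) (x : C) :
  (forall z, boundary G z -> 0 <= im_rot phi z) -> - im_rot phi x <= dist_bd G x.
Proof.
  intros Hhalf. apply dist_bd_ge. intros z Hz.
  rewrite Cmod_sub_sym. pose proof (im_rot_sub_le_Cmod phi z x). pose proof (Hhalf z Hz). lra.
Qed.

Lemma bd_detour_ge (x y : C) (m : R) :
  (forall z, boundary G z -> m <= Cmod (Cminus x z) + Cmod (Cminus z y)) -> m <= bd_detour x y.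
Proof.
  intros Hm. apply real_Glb_Rbar_ge with (Cmod (Cminus x z0) + Cmod (Cminus z0 y)).
  - intros w (z & Hz & ->). exact (Hm z Hz).
  - exists z0. split; [exact boundary_z0 | reflexivity].
Qed.

Lemma bd_detour_le (x y z : C) : boundary G z ->
  bd_detour x y <= Cmod (Cminus x z) + Cmod (Cminus z y).
Proof.
  intros Hz. apply real_Glb_Rbar_le with 0.
  - intros w (z' & _ & ->). apply Rplus_le_le_0_compat; apply Cmod_ge_0.
  - exists z. split; [exact Hz | reflexivity].
Qed.

Lemma Cmod_sub_le_bd_detour (x y : C) : Cmod (Cminus x y) <= bd_detour x y.
Proof. apply bd_detour_ge. intros z _. apply Cmod_sub_triangle. Qed.

Lemma s_metric_le_mul_p_metric (K : R) (x y : C) : 0 < K ->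
  (forall z, boundary G z ->
     Cmod (Cminus x y) ^ 2 + 4 * dist_bd G x * dist_bd G y <=
     K ^ 2 * (Cmod (Cminus x z) + Cmod (Cminus z y)) ^ 2) ->
  s_metric G x y <= K * p_metric G x y.
Proof.
  intros HK Hbound. unfold s_metric, p_metric. fold (bd_detour x y).
  pose proof (Cmod_sub_le_bd_detour x y) as HmD.
  set (m := Cmod (Cminus x y)) in *. set (D := bd_detour x y) in *.
  set (Q := sqrt (m ^ 2 + 4 * dist_bd G x * dist_bd G y)).
  pose proof (dist_bd_nonneg x). pose proof (dist_bd_nonneg y).
  assert (Hm0 : 0 <= m) by apply Cmod_ge_0.
  destruct (Req_dec m 0) as [Em | Hm]; [rewrite Em; unfold Rdiv; rewrite !Rmult_0_l; lra |].
  assert (HmQ : m <= Q).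
  { rewrite <- (sqrt_pow2 m Hm0). apply sqrt_le_1_alt. nra. }
  assert (HQD : Q / K <= D).
  { apply bd_detour_ge. intros z Hz. apply Rle_div_l; [exact HK |].
    set (S := Cmod (Cminus x z) + Cmod (Cminus z y)).
    assert (0 <= S) by (apply Rplus_le_le_0_compat; apply Cmod_ge_0).
    rewrite <- (sqrt_pow2 (S * K)) by nra. apply sqrt_le_1_alt.
    replace ((S * K) ^ 2) with (K ^ 2 * S ^ 2) by ring. exact (Hbound z Hz). }
  apply Rle_trans with (m / (Q / K)).
  - unfold Rdiv. apply Rmult_le_compat_l; [lra |].
    apply Rinv_le_contravar; [apply Rdiv_lt_0_compat |]; lra.
  - right. field. lra.
Qed.

End BoundaryInfima.

(* Distance from the unit vector of angle [g >= 0] to the ray [0, +oo). *)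
Definition ray_dist (g : R) : R := sin (Rmin g (PI / 2)).

Lemma ray_dist_nonneg (g : R) : 0 <= g -> 0 <= ray_dist g.
Proof.
  intros Hg. pose proof PI_RGT_0. pose proof (Rmin_r g (PI / 2)).
  apply sin_ge_0; [apply Rmin_glb |]; lra.
Qed.

Lemma ray_point_at_dist (u g : R) : 0 <= u -> 0 <= g ->
  exists s, 0 <= s /\ u ^ 2 + s ^ 2 - 2 * u * s * cos g = (u * ray_dist g) ^ 2.
Proof.
  intros Hu Hg. pose proof PI_RGT_0. unfold ray_dist.
  destruct (Rle_dec g (PI / 2)) as [Hle | Hgt].
  - rewrite Rmin_left by exact Hle. exists (u * cos g).
    split; [apply Rmult_le_pos; [exact Hu | apply cos_ge_0; lra] |].
    pose proof (sin2_cos2 g) as E; unfold Rsqr in E.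
    transitivity (u ^ 2 * (sin g * sin g + cos g * cos g) - u ^ 2 * (cos g * cos g));
      [rewrite E; ring | ring].
  - rewrite Rmin_right by lra. exists 0. rewrite sin_PI2. split; [lra | ring].
Qed.

Definition wedge (th : R) (z : C) : Prop := 0 <= im_rot PI z /\ 0 <= im_rot th z.

Section Sector.

Variable th : R.
Hypothesis Hth : PI < th < 2 * PI.

Lemma wedge_add (p q : C) : wedge th p -> wedge th q -> wedge th (Cplus p q).
Proof. intros [Hp1 Hp2] [Hq1 Hq2]. split; rewrite im_rot_add; lra. Qed.

Lemma wedge_polar (s t : R) : 0 <= s -> th <= t <= 2 * PI -> wedge th (polar s t).
Proof.
  intros Hs Ht. split; rewrite im_rot_polar; apply Rmult_le_pos; auto; apply sin_ge_0; lra.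
Qed.

Lemma sector_iff_not_wedge (x : C) : sector th x <-> ~ wedge th x.
Proof.
  pose proof PI_RGT_0. split.
  - intros (r & t & Hr & Ht0 & Htth & ->) [HPI Hthw].
    change (r * cos t, r * sin t) with (polar r t) in HPI, Hthw.
    rewrite im_rot_polar in HPI, Hthw.
    destruct (Rlt_le_dec t PI).
    + rewrite sin_minus, sin_PI, cos_PI in HPI.
      assert (0 < sin t) by (apply sin_gt_0; lra). nra.
    + assert (sin (t - th) < 0) by (apply sin_lt_0_var; lra). nra.
  - intros Hx.
    assert (Hx0 : x <> 0).
    { intros ->. apply Hx. unfold wedge, im_rot, RtoC; cbn [fst snd]. split; lra. }
    destruct (polar_exists x Hx0) as (r & t & Hr & Ht & ->).
    exists r, t. repeat split; [exact Hr | | ].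
    + destruct (Req_dec t 0) as [-> | ]; [exfalso | lra].
      apply Hx. replace (polar r 0) with (polar r (2 * PI))
        by (unfold polar; rewrite cos_2PI, sin_2PI, cos_0, sin_0; reflexivity).
      apply wedge_polar; lra.
    + destruct (Rlt_le_dec t th); [assumption | exfalso].
      apply Hx, wedge_polar; lra.
Qed.

Lemma sector_sub_wedge (x z : C) : sector th x -> wedge th z -> sector th (Cminus x z).
Proof.
  rewrite !sector_iff_not_wedge. intros Hx Hz Hxz. apply Hx.
  replace x with (Cplus (Cminus x z) z) by ring. now apply wedge_add.
Qed.

Lemma boundary_sector_wedge (z : C) : boundary (sector th) z -> wedge th z.
Proof.
  intros Hz.
  assert (Happrox : forall e, 0 < e -> exists w, wedge th w /\ Cmod (Cminus w z) < e).
  { intros e He. destruct (Hz e He) as [_ (w & Hw & Hwz)].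
    exists w. split; [| exact Hwz]. apply NNPP. now rewrite <- sector_iff_not_wedge. }
  split; apply im_rot_nonneg_of_approx; intros e He;
    destruct (Happrox e He) as (w & [Hw1 Hw2] & Hwz); eauto.
Qed.

Lemma boundary_sector_0 : boundary (sector th) 0.
Proof.
  pose proof PI_RGT_0. intros e He.
  assert (Hdist : forall t, Cmod (Cminus (polar (e / 2) t) 0) < e).
  { intros t. replace (Cminus (polar (e / 2) t) 0) with (polar (e / 2) t) by ring.
    rewrite Cmod_polar; lra. }
  split.
  - exists (polar (e / 2) (PI / 2)). split; [| apply Hdist].
    exists (e / 2), (PI / 2). repeat split; lra.
  - exists (polar (e / 2) th). split; [| apply Hdist].
    rewrite sector_iff_not_wedge. intros Hn. apply Hn, wedge_polar; lra.
Qed.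

Lemma cos_half_bounds : -1 <= cos (th / 2) < 0.
Proof. pose proof (COS_bound (th / 2)). split; [lra | apply cos_lt_0; lra]. Qed.

Lemma ray_dist_mul_le (a b : R) : 0 <= a <= b -> b <= th ->
  ray_dist a * ray_dist (th - b) <= (1 + cos (a - b)) / 2 - cos (th / 2).
Proof.
  intros Hab Hb. pose proof PI_RGT_0. pose proof cos_half_bounds as Hc. unfold ray_dist.
  set (p := Rmin a (PI / 2)). set (q := Rmin (th - b) (PI / 2)).
  assert (Hp : 0 <= p <= a /\ p <= PI / 2).
  { unfold p. repeat split; [apply Rmin_glb; lra | apply Rmin_l | apply Rmin_r]. }
  assert (Hq : 0 <= q <= th - b /\ q <= PI / 2).
  { unfold q. repeat split; [apply Rmin_glb; lra | apply Rmin_l | apply Rmin_r]. }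
  assert (Hpq : 2 * (sin p * sin q) <= 1 - cos (p + q)).
  { pose proof (COS_bound (p - q)) as Hcos. rewrite cos_minus in Hcos. rewrite cos_plus. lra. }
  replace (cos (a - b)) with (cos (b - a)) by (rewrite <- cos_neg; f_equal; ring).
  enough (2 * cos (th / 2) <= cos (p + q) + cos (b - a)) by lra.
  destruct (Rle_dec (th - p - q) PI) as [Hle | Hgt].
  - assert (cos (th - p - q) <= cos (b - a)) by (apply cos_decr_1; lra).
    assert (Hsum : cos (p + q) + cos (th - p - q) = 2 * cos (p + q - th / 2) * cos (th / 2)).
    { rewrite form1.
      replace ((p + q - (th - p - q)) / 2) with (p + q - th / 2) by field.
      replace ((p + q + (th - p - q)) / 2) with (th / 2) by field. reflexivity. }
    pose proof (COS_bound (p + q - th / 2)). nra.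
  - assert (Hcpq : cos (th - PI) <= cos (p + q)) by (apply cos_decr_1; lra).
    rewrite cos_minus, cos_PI, sin_PI in Hcpq.
    assert (cos th = 2 * cos (th / 2) * cos (th / 2) - 1)
      by (rewrite <- cos_2a_cos; f_equal; field).
    pose proof (COS_bound (b - a)). nra.
Qed.

Lemma dist_bd_sector_le (x z : C) (u a : R) : sector th x -> wedge th z ->
  Cminus x z = polar u a -> 0 <= u -> 0 <= a <= th ->
  dist_bd (sector th) x <= u * ray_dist a /\ dist_bd (sector th) x <= u * ray_dist (th - a).
Proof.
  intros Hx Hz Hxz Hu Ha. pose proof PI_RGT_0.
  set (d := dist_bd (sector th) x).
  assert (Hd : 0 <= d) by exact (dist_bd_nonneg _ _ boundary_sector_0 x).
  assert (to_ray : forall phi s, th <= phi <= 2 * PI -> 0 <= s ->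
            d ^ 2 <= u ^ 2 + s ^ 2 - 2 * u * s * cos (a - phi)).
  { intros phi s Hphi Hs. rewrite <- Cmod_polar_sub_sq, <- Hxz.
    replace (Cminus (Cminus x z) (polar s phi)) with (Cminus x (Cplus z (polar s phi))) by ring.
    apply pow_incr. split; [exact Hd |].
    apply dist_bd_le_of_not_in; [exact Hx |]. rewrite sector_iff_not_wedge.
    intros Hn; apply Hn. apply wedge_add; [exact Hz | now apply wedge_polar]. }
  assert (from_sq : forall g, 0 <= g -> d ^ 2 <= (u * ray_dist g) ^ 2 -> d <= u * ray_dist g).
  { intros g Hg Hsq.
    assert (0 <= u * ray_dist g) by (apply Rmult_le_pos; [lra | now apply ray_dist_nonneg]).
    nra. }
  split.
  - apply from_sq; [lra |].
    destruct (ray_point_at_dist u a Hu (proj1 Ha)) as (s & Hs & <-).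
    replace (cos a) with (cos (a - 2 * PI)) by (rewrite cos_minus, cos_2PI, sin_2PI; ring).
    apply to_ray; lra.
  - apply from_sq; [lra |].
    destruct (ray_point_at_dist u (th - a) Hu ltac:(lra)) as (s & Hs & <-).
    replace (cos (th - a)) with (cos (a - th)) by (rewrite <- cos_neg; f_equal; ring).
    apply to_ray; lra.
Qed.

Lemma sector_bound (x y z : C) : sector th x -> sector th y -> wedge th z ->
  Cmod (Cminus x y) ^ 2 + 4 * dist_bd (sector th) x * dist_bd (sector th) y <=
  (1 - cos (th / 2)) * (Cmod (Cminus x z) + Cmod (Cminus z y)) ^ 2.
Proof.
  intros Hx Hy Hz.
  destruct (sector_sub_wedge x z Hx Hz) as (u & a & Hu & Ha0 & Ha & Exz).
  destruct (sector_sub_wedge y z Hy Hz) as (v & b & Hv & Hb0 & Hb & Eyz).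
  fold (polar u a) in Exz. fold (polar v b) in Eyz.
  assert (Cxz : Cmod (Cminus x z) = u) by (rewrite Exz; apply Cmod_polar; lra).
  assert (Czy : Cmod (Cminus z y) = v) by (rewrite Cmod_sub_sym, Eyz; apply Cmod_polar; lra).
  assert (Cxy : Cmod (Cminus x y) ^ 2 = u ^ 2 + v ^ 2 - 2 * u * v * cos (a - b)).
  { replace (Cminus x y) with (Cminus (Cminus x z) (Cminus y z)) by ring.
    rewrite Exz, Eyz. apply Cmod_polar_sub_sq. }
  destruct (dist_bd_sector_le x z u a Hx Hz Exz) as [Hxa Hxa']; try lra.
  destruct (dist_bd_sector_le y z v b Hy Hz Eyz) as [Hyb Hyb']; try lra.
  pose proof (dist_bd_nonneg _ _ boundary_sector_0 x).
  pose proof (dist_bd_nonneg _ _ boundary_sector_0 y).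
  set (dx := dist_bd (sector th) x) in *. set (dy := dist_bd (sector th) y) in *.
  assert (Hprod : dx * dy <= u * v * ((1 + cos (a - b)) / 2 - cos (th / 2))).
  { destruct (Rle_dec a b).
    - apply Rle_trans with (u * v * (ray_dist a * ray_dist (th - b))).
      + replace (u * v * (ray_dist a * ray_dist (th - b)))
          with ((u * ray_dist a) * (v * ray_dist (th - b))) by ring.
        apply Rmult_le_compat; lra.
      + apply Rmult_le_compat_l; [nra | apply ray_dist_mul_le; lra].
    - apply Rle_trans with (u * v * (ray_dist b * ray_dist (th - a))).
      + replace (u * v * (ray_dist b * ray_dist (th - a)))
          with ((u * ray_dist (th - a)) * (v * ray_dist b)) by ring.
        apply Rmult_le_compat; lra.
      + replace (cos (a - b)) with (cos (b - a)) by (rewrite <- cos_neg; f_equal; ring).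
        apply Rmult_le_compat_l; [nra | apply ray_dist_mul_le; lra]. }
  rewrite Cxz, Czy, Cxy. pose proof cos_half_bounds.
  (* the right-hand side exceeds the left-hand one by -cos(th/2) (u - v)^2 *)
  assert (0 <= - cos (th / 2) * (u - v) ^ 2) by (apply Rmult_le_pos; [lra | apply pow2_ge_0]).
  nra.
Qed.

Lemma sector_quarter_points :
  Cmod (Cminus (polar 1 (th / 4)) (polar 1 (3 * th / 4))) = 2 * sin (th / 4) /\
  sin (th / 4) <= dist_bd (sector th) (polar 1 (th / 4)) /\
  sin (th / 4) <= dist_bd (sector th) (polar 1 (3 * th / 4)) /\
  bd_detour (sector th) (polar 1 (th / 4)) (polar 1 (3 * th / 4)) <= 2.
Proof.
  pose proof PI_RGT_0. pose proof boundary_sector_0 as H0.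
  set (sg := sin (th / 4)).
  assert (Hsg : 0 < sg) by (apply sin_gt_0; lra).
  split; [| split; [| split]].
  - assert (Cmod (Cminus (polar 1 (th / 4)) (polar 1 (3 * th / 4))) ^ 2 = (2 * sg) ^ 2).
    { rewrite Cmod_polar_sub_sq.
      replace (th / 4 - 3 * th / 4) with (- (2 * (th / 4))) by field.
      rewrite cos_neg, cos_2a_sin. fold sg. ring. }
    pose proof (Cmod_ge_0 (Cminus (polar 1 (th / 4)) (polar 1 (3 * th / 4)))). nra.
  - replace sg with (- im_rot PI (polar 1 (th / 4)))
      by (rewrite im_rot_polar, sin_minus, sin_PI, cos_PI; fold sg; ring).
    apply (dist_bd_ge_neg_im_rot _ _ H0). intros z Hz. exact (proj1 (boundary_sector_wedge z Hz)).
  - replace sg with (- im_rot th (polar 1 (3 * th / 4))).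
    2: { rewrite im_rot_polar. replace (3 * th / 4 - th) with (- (th / 4)) by field.
         rewrite sin_neg. fold sg. ring. }
    apply (dist_bd_ge_neg_im_rot _ _ H0). intros z Hz. exact (proj2 (boundary_sector_wedge z Hz)).
  - assert (Hunit : forall t, Cmod (Cminus (polar 1 t) 0) = 1).
    { intros t. replace (Cminus (polar 1 t) 0) with (polar 1 t) by ring. apply Cmod_polar; lra. }
    replace 2 with (Cmod (Cminus (polar 1 (th / 4)) 0) + Cmod (Cminus 0 (polar 1 (3 * th / 4))))
      by (rewrite (Cmod_sub_sym 0), !Hunit; ring).
    now apply bd_detour_le.
Qed.

Lemma sector_sharp_pair : exists x y, sector th x /\ sector th y /\
  0 < p_metric (sector th) x y /\
  sqrt 2 * sin (th / 4) * p_metric (sector th) x y <= s_metric (sector th) x y.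
Proof.
  pose proof PI_RGT_0.
  destruct sector_quarter_points as (Hm & Hdx & Hdy & HD).
  set (x := polar 1 (th / 4)) in *. set (y := polar 1 (3 * th / 4)) in *.
  set (sg := sin (th / 4)) in *.
  assert (Hsg : 0 < sg) by (apply sin_gt_0; lra).
  exists x, y. split; [exists 1, (th / 4); repeat split; lra |].
  split; [exists 1, (3 * th / 4); repeat split; lra |].
  assert (HD0 : 2 * sg <= bd_detour (sector th) x y)
    by (rewrite <- Hm; exact (Cmod_sub_le_bd_detour _ _ (boundary_sector_0) x y)).
  unfold s_metric, p_metric. fold (bd_detour (sector th) x y). rewrite Hm.
  set (D := bd_detour (sector th) x y) in *.
  set (Q := sqrt ((2 * sg) ^ 2 + 4 * dist_bd (sector th) x * dist_bd (sector th) y)).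
  assert (Hs2 : 0 < sqrt 2) by (apply sqrt_lt_R0; lra).
  assert (HQ : sqrt 2 * (2 * sg) <= Q).
  { unfold Q. rewrite <- (sqrt_pow2 (sqrt 2 * (2 * sg))) by nra. apply sqrt_le_1_alt.
    replace ((sqrt 2 * (2 * sg)) ^ 2) with (sqrt 2 * sqrt 2 * (4 * sg ^ 2)) by ring.
    rewrite sqrt_sqrt by lra. nra. }
  split; [apply Rdiv_lt_0_compat; nra |].
  apply Rle_trans with sg.
  - replace (sqrt 2 * sg * (2 * sg / Q)) with (sg * (sqrt 2 * (2 * sg)) / Q) by (field; nra).
    apply Rle_div_l; nra.
  - apply Rle_div_r; nra.
Qed.

End Sector.

Lemma sqrt2_sin_quarter_sq (t : R) : (sqrt 2 * sin (t / 4)) ^ 2 = 1 - cos (t / 2).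
Proof.
  replace (t / 2) with (2 * (t / 4)) by field. rewrite cos_2a_sin.
  replace ((sqrt 2 * sin (t / 4)) ^ 2)
    with (sqrt 2 * sqrt 2 * (sin (t / 4) * sin (t / 4))) by ring.
  rewrite sqrt_sqrt by lra. ring.
Qed.

Theorem theorem3p10 (theta : R) (Htheta : PI < theta < 2 * PI) :
  (forall x y : C, sector theta x -> sector theta y ->
     s_metric (sector theta) x y <=
     sqrt 2 * sin (theta / 4) * p_metric (sector theta) x y) /\
  (forall c : R,
     (forall x y : C, sector theta x -> sector theta y ->
        s_metric (sector theta) x y <= c * p_metric (sector theta) x y) ->
     sqrt 2 * sin (theta / 4) <= c).
Proof.
  pose proof PI_RGT_0.
  assert (HK : 0 < sqrt 2 * sin (theta / 4)).
  { apply Rmult_lt_0_compat; [apply sqrt_lt_R0; lra | apply sin_gt_0; lra]. }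
  split.
  - intros x y Hx Hy.
    apply (s_metric_le_mul_p_metric _ _ (boundary_sector_0 theta Htheta)); [exact HK |].
    intros z Hz. rewrite sqrt2_sin_quarter_sq.
    apply sector_bound; auto. now apply boundary_sector_wedge.
  - intros c Hc.
    destruct (sector_sharp_pair theta Htheta) as (x & y & Hx & Hy & Hp & Hsharp).
    specialize (Hc x y Hx Hy).
    apply Rmult_le_reg_r with (p_metric (sector theta) x y); lra.
Qed.
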